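(* Let $\mathcal A$ be an associative unital algebra and $a_0,\dots,a_n\in\mathcal A$ invertible ($n\ge1$). Then in the cyclic quotient of noncommutative differential forms, $$\{a_1,\dots,a_n\}+\sum_{i=0}^{n-1}(-1)^{i+1}\{a_0,\dots,a_{i-1},a_ia_{i+1},a_{i+2},\dots,a_n\}+(-1)^{n+1}\{a_0,\dots,a_{n-1}\}=0.$$ For example $\{a\}-\{ab\}+\{b\}=0$ and $\{b,c\}-\{ab,c\}+\{a,bc\}-\{a,b\}=0$.
   Context: Let $\Omega^\bullet\mathcal A$ be the noncommutative de Rham algebra of $\mathcal A$: the graded algebra generated by $\mathcal A$ in degree $0$ and symbols $da$ in degree $1$, with $d(ab)=da\,b+a\,db$, $d1=0$, extended to a differential $d$ with $d^2=0$ and the graded Leibniz rule. Its cyclic quotient is $\Omega^\bullet\mathcal A/[\Omega^\bullet\mathcal A,\Omega^\bullet\mathcal A]$ (graded commutators), so that $\omega_1\omega_2=(-1)^{|\omega_1||\omega_2|}\omega_2\omega_1$ there. For invertible $a_1,\dots,a_n$, $\{a_1,\dots,a_n\}$ denotes the class of $da_1\,da_2\cdots da_n\,a_n^{-1}\cdots a_1^{-1}$ (the noncommutative analogue of $d\log a_1\wedge\dots\wedge d\log a_n$). *)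

From mathcomp Require Import all_boot all_order all_algebra.
Set Implicit Arguments. Unset Strict Implicit. Unset Printing Implicit Defensive.
Import GRing.Theory.
Local Open Scope ring_scope.

Definition alg_morph (k : comNzRingType) (A B : algType k) (f : A -> B) : Prop :=
  [/\ forall x y, f (x + y) = f x + f y,
      forall (c : k) x, f (c *: x) = c *: f x,
      f 1 = 1 &
      forall x y, f (x * y) = f x * f y].

(* A (nonnegatively) graded differential k-algebra structure on Om:
   hom n x  means  x is homogeneous of degree n (x in Om^n);
   Om is the direct sum of the Om^n; dd is the differential of degree +1,
   dd^2 = 0, graded Leibniz rule. *)
Record dga (k : comNzRingType) (Om : algType k) := DGA {
  hom : nat -> Om -> Prop;
  dd : Om -> Om;
  hom0 : forall n, hom n 0;
  homD : forall n x y, hom n x -> hom n y -> hom n (x + y);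
  homZ : forall n (c : k) x, hom n x -> hom n (c *: x);
  homM : forall m n x y, hom m x -> hom n y -> hom (m + n) (x * y);
  hom1 : hom 0 1;
  hom_span : forall x, exists N (f : nat -> Om),
      (forall i, hom i (f i)) /\ x = \sum_(i < N) f i;
  hom_indep : forall N (f : nat -> Om), (forall i, hom i (f i)) ->
      \sum_(i < N) f i = 0 -> forall i, (i < N)%N -> f i = 0;
  ddD : forall x y, dd (x + y) = dd x + dd y;
  ddZ : forall (c : k) x, dd (c *: x) = c *: dd x;
  dd_hom : forall n x, hom n x -> hom n.+1 (dd x);
  dd2 : forall x, dd (dd x) = 0;
  ddM : forall m x y, hom m x -> dd (x * y) = dd x * y + (-1) ^+ m * (x * dd y)
}.

Definition dga_morph (k : comNzRingType) (Om Om' : algType k)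
  (D : dga Om) (D' : dga Om') (phi : Om -> Om') : Prop :=
  [/\ alg_morph phi,
      forall x, phi (dd D x) = dd D' (phi x) &
      forall n x, hom D n x -> hom D' n (phi x)].

(* (D, iota) is the noncommutative de Rham algebra Omega^* A of A:
   iota : A -> Om^0 is a unital algebra morphism, and (D, iota) is universal
   among DG algebras receiving a unital algebra morphism from A into degree 0
   (this universal property characterises Omega^* A, generated by A in degree 0
   and the symbols da in degree 1 with d(ab) = da b + a db, d1 = 0). *)
Definition nc_deRham (k : comNzRingType) (A Om : algType k)
  (D : dga Om) (iota : A -> Om) : Prop :=
  [/\ alg_morph iota,
      forall a, hom D 0 (iota a) &
      forall (Om' : algType k) (D' : dga Om') (j : A -> Om'),
        alg_morph j -> (forall a, hom D' 0 (j a)) ->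
        exists phi : Om -> Om',
          [/\ dga_morph D D' phi,
              forall a, phi (iota a) = j a &
              forall psi, dga_morph D D' psi -> (forall a, psi (iota a) = j a) ->
                forall x, psi x = phi x]].

(* The k-submodule [Om, Om] spanned by graded commutators of homogeneous
   elements. An element is zero in the cyclic quotient Om/[Om,Om] iff it lies in it. *)
Inductive comm_span (k : comNzRingType) (Om : algType k) (D : dga Om) : Om -> Prop :=
  | cs_zero : comm_span D 0
  | cs_comm m n x y : hom D m x -> hom D n y ->
      comm_span D (x * y - (-1) ^+ (m * n) * (y * x))
  | cs_add x y : comm_span D x -> comm_span D y -> comm_span D (x + y)
  | cs_scale (c : k) x : comm_span D x -> comm_span D (c *: x).

(* The symbol {a_1,...,a_n}: given the list of pairs (a_i, a_i^{-1}),
   the form  d a_1 d a_2 ... d a_n a_n^{-1} ... a_1^{-1}  (to be read in the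
   cyclic quotient). *)
Definition sym (k : comNzRingType) (A Om : algType k) (D : dga Om)
  (iota : A -> Om) (s : seq (A * A)) : Om :=
  (\prod_(p <- s) dd D (iota p.1)) * \prod_(p <- rev s) iota p.2.

Definition pairs (A : Type) (a b : nat -> A) (n : nat) : seq (A * A) :=
  [seq (a i, b i) | i <- iota 0 n.+1].

Definition merge_at (k : comNzRingType) (A : algType k) (a b : nat -> A) (n i : nat)
  : seq (A * A) :=
  take i (pairs a b n) ++ (a i * a i.+1, b i.+1 * b i) :: drop i.+2 (pairs a b n).

From Pilot Require Import Defs.
From mathcomp Require Import all_boot all_order all_algebra.
Set Implicit Arguments. Unset Strict Implicit. Unset Printing Implicit Defensive.
Import GRing.Theory.
Local Open Scope ring_scope.

(* Expanding each merged symbol by the Leibniz rule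
   d(a_i a_(i+1)) = da_i a_(i+1) + a_i da_(i+1) writes it as U_(i+1) + U_i, where
   U_j is {a_0,...,a_n} with the j-th factor d a_j replaced by a_j.  The
   alternating sum therefore telescopes to (-1)^n U_n - U_0.  Since
   a_n a_n^-1 = 1, U_n is {a_0,...,a_(n-1)}, which cancels the last term; and
   U_0 = a_0 W with W := {a_1,...,a_n} a_0^-1, while {a_1,...,a_n} = W a_0, so
   what remains is the graded commutator of W (degree n) with a_0 (degree 0). *)

Lemma hom_prod (k : comNzRingType) (Om : algType k) (D : dga Om) (T : Type)
    (F : T -> Om) (m : nat) (s : seq T) :
  (forall x, Defs.hom D m (F x)) -> Defs.hom D (m * size s) (\prod_(x <- s) F x).
Proof.
move=> homF; elim: s => [|x s IHs]; first by rewrite big_nil muln0; exact: hom1.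
by rewrite big_cons mulnS; apply: homM.
Qed.

Lemma telescope_alt (R : pzRingType) (F : nat -> R) (m : nat) :
  \sum_(i < m) (-1) ^+ i.+1 * (F i.+1 + F i) = (-1) ^+ m * F m - F 0%N.
Proof.
elim: m => [|m IHm]; first by rewrite big_ord0 expr0 mul1r subrr.
rewrite big_ord_recr /= IHm exprS mulrDr !mulN1r !mulNr.
by rewrite (addrC (- _)) addrAC addNKr.
Qed.

Section Symbols.

Variables (k : comNzRingType) (A Om : algType k) (D : dga Om) (iota : A -> Om).
Hypotheses (iota_morph : alg_morph iota) (iota_hom0 : forall x, Defs.hom D 0 (iota x)).

Definition dprod (s : seq (A * A)) : Om := \prod_(p <- s) dd D (iota p.1).
Definition invprod (s : seq (A * A)) : Om := \prod_(p <- rev s) iota p.2.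

Lemma symE s : sym D iota s = dprod s * invprod s.
Proof. by []. Qed.

Lemma dprod_nil : dprod [::] = 1.
Proof. exact: big_nil. Qed.

Lemma dprod_cons p s : dprod (p :: s) = dd D (iota p.1) * dprod s.
Proof. exact: big_cons. Qed.

Lemma dprod_cat s t : dprod (s ++ t) = dprod s * dprod t.
Proof. exact: big_cat. Qed.

Lemma invprod_cat s t : invprod (s ++ t) = invprod t * invprod s.
Proof. by rewrite /invprod rev_cat big_cat. Qed.

Lemma invprod_cons p s : invprod (p :: s) = invprod s * iota p.2.
Proof. by rewrite -cat1s invprod_cat /invprod big_seq1. Qed.

Lemma invprod_rcons s p : invprod (rcons s p) = iota p.2 * invprod s.
Proof. by rewrite -cats1 invprod_cat /invprod big_seq1. Qed.

Lemma hom_sym s : Defs.hom D (size s) (sym D iota s).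
Proof.
rewrite symE -[size s]addn0; apply: homM.
  by rewrite -[size s]mul1n; apply: hom_prod => p; apply/dd_hom/iota_hom0.
by rewrite -(mul0n (size (rev s))); apply: hom_prod.
Qed.

Lemma iota_mul_eq1 x y : x * y = 1 -> iota x * iota y = 1.
Proof. by case: iota_morph => _ _ iota1 iotaM; rewrite -iotaM => ->. Qed.

(* The term of the Leibniz expansion of [sym (s ++ p :: t)] in which the
   factor [d p.1] is replaced by [p.1]. *)
Definition sym_undiff (s : seq (A * A)) (p : A * A) (t : seq (A * A)) : Om :=
  dprod s * iota p.1 * dprod t * invprod (s ++ p :: t).

Lemma sym_merge s t (x y : A * A) :
  sym D iota (s ++ (x.1 * y.1, y.2 * x.2) :: t)
  = sym_undiff (rcons s x) y t + sym_undiff s x (y :: t).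
Proof.
case: iota_morph => _ _ _ iotaM.
rewrite /sym_undiff cat_rcons symE -cats1 !dprod_cat !dprod_cons dprod_nil.
rewrite !invprod_cat !invprod_cons /= iotaM (ddM _ (iota_hom0 _)) expr0 mul1r iotaM.
by rewrite mulr1 !mulrA !mulrDr !mulrDl !mulrA.
Qed.

Lemma sym_undiff_last s x y : x * y = 1 -> sym_undiff s (x, y) [::] = sym D iota s.
Proof.
move=> /iota_mul_eq1 xy1.
by rewrite /sym_undiff cats1 invprod_rcons dprod_nil mulr1 /= mulrA -(mulrA _ (iota x)) xy1 mulr1.
Qed.

Lemma sym_sub_undiff_first x y t :
  y * x = 1 -> comm_span D (sym D iota t - sym_undiff [::] (x, y) t).
Proof.
move=> /iota_mul_eq1 yx1.
have -> : sym D iota t = sym D iota t * iota y * iota x by rewrite -mulrA yx1 mulr1.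
have -> : sym_undiff [::] (x, y) t = iota x * (sym D iota t * iota y).
  by rewrite /sym_undiff dprod_nil mul1r invprod_cons symE !mulrA.
have homW : Defs.hom D (size t) (sym D iota t * iota y).
  by rewrite -[size t]addn0; apply: homM; [exact: hom_sym | exact: iota_hom0].
rewrite -[iota x * _]mul1r -(expr0 (-1 : Om)) -(muln0 (size t)).
exact: cs_comm.
Qed.

End Symbols.

Section Pairs.

Variables (k : comNzRingType) (A : algType k) (a b : nat -> A) (n : nat).

Lemma size_pairs : size (pairs a b n) = n.+1.
Proof. by rewrite size_map size_iota. Qed.

Lemma nth_pairs x0 i : (i <= n)%N -> nth x0 (pairs a b n) i = (a i, b i).
Proof. by move=> le_in; rewrite (nth_map 0%N) ?size_iota // nth_iota. Qed.

Variables (Om : algType k) (D : dga Om) (iota : A -> Om).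

Definition pairs_undiff (j : nat) : Om :=
  sym_undiff D iota (take j (pairs a b n)) (a j, b j) (drop j.+1 (pairs a b n)).

Lemma sym_merge_at i :
  alg_morph iota -> (forall x, Defs.hom D 0 (iota x)) -> (i < n)%N ->
  sym D iota (merge_at a b n i) = pairs_undiff i.+1 + pairs_undiff i.
Proof.
move=> iota_morph iota_hom0 lt_in; have le_in := ltnW lt_in.
rewrite /pairs_undiff (take_nth (a i, b i)) ?size_pairs // nth_pairs //.
rewrite (@drop_nth _ (a i, b i) i.+1) ?size_pairs // nth_pairs //.
exact: (sym_merge iota_morph iota_hom0 _ _ (a i, b i) (a i.+1, b i.+1)).
Qed.

End Pairs.

Theorem theorem4p7 (k : comNzRingType) (A Om : algType k) (D : dga Om)
  (iota : A -> Om) (n : nat) (a b : nat -> A) :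
  nc_deRham D iota -> (0 < n)%N ->
  (forall i, (i <= n)%N -> a i * b i = 1 /\ b i * a i = 1) ->
  comm_span D
    (sym D iota (behead (pairs a b n))
     + \sum_(i < n) (-1) ^+ i.+1 * sym D iota (merge_at a b n i)
     + (-1) ^+ n.+1 * sym D iota (take n (pairs a b n))).
Proof.
case=> iota_morph iota_hom0 _ _ inv_ab.
pose U := pairs_undiff a b n D iota.
have -> : \sum_(i < n) (-1) ^+ i.+1 * sym D iota (merge_at a b n i)
          = (-1) ^+ n * U n - U 0%N.
  rewrite -telescope_alt; apply: eq_bigr => i _.
  by rewrite sym_merge_at.
have -> : U n = sym D iota (take n (pairs a b n)).
  rewrite /U /pairs_undiff drop_oversize ?size_pairs //.
  by rewrite sym_undiff_last // (proj1 (inv_ab n _)).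
rewrite exprS mulN1r mulNr addrA addrAC addrK.
rewrite /U /pairs_undiff take0 drop1.
by apply: sym_sub_undiff_first; case: (inv_ab 0%N _).
Qed.
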